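(* Let $\theta$ be uniformly distributed on $[0,2\pi]$, let $k\in\{1,2,3\}$ and $W=e^{-i\theta\sigma_k}$. Let $A,C$ be arbitrary linear operators on $\mathbb{C}^2$ and let $B=D=\sigma_j$ for some $j\in\{0,1,2,3\}$. Then $$\mathbb{E}_\theta\,\text{Tr}[WAW^\dagger B]\,\text{Tr}[WCW^\dagger D]=\Big[\tfrac12+\tfrac{\delta_{j0}+\delta_{jk}}{2}\Big]\text{Tr}[AB]\,\text{Tr}[CD]+\Big[-\tfrac12+\tfrac{\delta_{j0}+\delta_{jk}}{2}\Big]\text{Tr}[AB\sigma_k]\,\text{Tr}[CD\sigma_k].$$
   Context: $\sigma_0=I$, $\sigma_1,\sigma_2,\sigma_3$ are the Pauli matrices $X,Y,Z$; $\delta$ is the Kronecker delta; $\mathbb{E}_\theta g=\frac1{2\pi}\int_0^{2\pi}g\,d\theta$. *)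

From HB Require Import structures.
From mathcomp Require Import all_boot all_order all_algebra.
From mathcomp Require Import all_classical all_reals all_analysis.
From mathcomp Require Import complex.
Set Implicit Arguments. Unset Strict Implicit. Unset Printing Implicit Defensive.
Import Order.TTheory GRing.Theory Num.Theory.
Local Open Scope ring_scope.
Local Open Scope complex_scope.

Section Defs.
Variable R : realType.
Local Notation C := R[i].
Local Notation M2 := 'M[C]_2.

Definition pauli (j : 'I_4) : M2 :=
  match val j with
  | 0 => \matrix_(a < 2, b < 2) (if a == b then 1 else 0)
  | 1 => \matrix_(a < 2, b < 2) (if a == b then 0 else 1)
  | 2 => \matrix_(a < 2, b < 2)
           (if a == b then 0 else if (val a == 0)%N then - 'i else 'i)
  | _ => \matrix_(a < 2, b < 2)
           (if a == b then (if (val a == 0)%N then 1 else -1) else 0)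
  end.

Definition adj (A : M2) : M2 := (map_mx (@conjc R) A)^T.

(* W = exp(-i theta sigma_k); since sigma_k^2 = I (k = 1,2,3),
   exp(-i theta sigma_k) = cos theta I - i sin theta sigma_k. *)
Definition Wrot (k : 'I_4) (theta : R) : M2 :=
  (cos theta)%:C *: 1%:M - ('i * (sin theta)%:C) *: pauli k.

Definition Etheta (g : R -> C) : C :=
  ((2 * pi)^-1)%:C *
  ((Rintegral lebesgue_measure `[0, 2 * pi]%classic (fun t => complex.Re (g t)))
   +i* (Rintegral lebesgue_measure `[0, 2 * pi]%classic (fun t => complex.Im (g t)))).

Definition kdelta (a b : 'I_4) : C := if a == b then 1 else 0.

End Defs.

From HB Require Import structures.
From mathcomp Require Import all_boot all_order all_algebra.
From mathcomp Require Import all_classical all_reals all_analysis.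
From mathcomp Require Import complex ring.
Set Implicit Arguments.
Unset Strict Implicit.
Unset Printing Implicit Defensive.
Import Order.TTheory GRing.Theory Num.Theory numFieldNormedType.Exports.
Local Open Scope ring_scope.
Local Open Scope complex_scope.

(* Write S = sigma_k and W(t) = cos t - i sin t S.  Since S is an involutive
   Hermitian matrix, W(s) W(t) = W(s + t) and W(t)^dagger = W(-t).  If sigma_j
   commutes with S (j = 0 or j = k), it commutes with W, and Tr[W A W^dagger B]
   = Tr[AB] does not depend on theta.  Otherwise sigma_j anticommutes with S, so
   W(-theta) B = B W(theta) and Tr[W A W^dagger B] = Tr[A B W(2 theta)]
   = cos(2 theta) Tr[AB] - i sin(2 theta) Tr[AB S]: a first harmonic, and the
   mean of a product of two first harmonics is half the sum of the products of
   their coefficients. *)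

Section Harmonics.
Variable R : realType.

Lemma Rintegral_derive (f F : R -> R) (a b : R) : a < b -> continuous f ->
  (forall x, is_derive x (1 : R) F (f x)) ->
  Rintegral lebesgue_measure `[a, b]%classic f = F b - F a.
Proof.
move=> ab cf dF.
have cF : continuous F.
  by move=> x; apply: differentiable_continuous; apply/derivable1_diffP; exact: ex_derive.
rewrite /Rintegral (@continuous_FTC2 R f F a b ab) //.
- exact: continuous_subspaceT.
- split.
  + by move=> x _; exact: ex_derive.
  + exact/cvg_at_right_filter/cF.
  + exact/cvg_at_left_filter/cF.
- by move=> x _; rewrite derive1E; exact: derive_val.
Qed.

Lemma Rintegral_harmonic (n : nat) (a b c : R) : (0 < n)%N ->
  Rintegral lebesgue_measure `[0, 2 * pi]%classic
    (fun t => a + b * cos (n%:R * t) + c * sin (n%:R * t)) = a * (2 * pi).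
Proof.
move=> n_gt0; set w : R := n%:R; have w_neq0 : w != 0 by rewrite pnatr_eq0 -lt0n.
pose f t := a + b * cos (w * t) + c * sin (w * t).
pose F := a *: (@idfun R) + (b / w) *: (fun t => sin (w * t))
          - (c / w) *: (fun t => cos (w * t)).
have dF x : is_derive x (1 : R) F (f x).
  by apply: is_derive_eq; rewrite /f /GRing.scale /=; field.
have cf : continuous f.
  by move=> x; apply: differentiable_continuous; apply/derivable1_diffP; rewrite /f.
rewrite (Rintegral_derive _ cf dF); last by rewrite mulr_gt0 ?pi_gt0.
have w2pi : w * (2 * pi) = 0 + pi *+ 2 *+ n by rewrite add0r !mulr_natl.
rewrite /F !fctE /= w2pi (periodicn (@sinD2pi R)) (periodicn (@cosD2pi R)).
by rewrite mulr0 sin0 cos0 /GRing.scale /=; ring.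
Qed.

Lemma eq_Etheta (f g : R -> R[i]) : f =1 g -> Etheta f = Etheta g.
Proof. by move=> /funext ->. Qed.

Lemma Etheta_harmonic (n : nat) (a b c : R[i]) : (0 < n)%N ->
  Etheta (fun t => a + b * (cos (n%:R * t))%:C + c * (sin (n%:R * t))%:C) = a.
Proof.
move=> n_gt0; rewrite /Etheta.
have -> : (fun t => complex.Re
              (a + b * (cos (n%:R * t))%:C + c * (sin (n%:R * t))%:C)) =
    fun t => complex.Re a + complex.Re b * cos (n%:R * t) + complex.Re c * sin (n%:R * t).
  by apply/funext => t; case: a b c => [? ?] [? ?] [? ?] /=; ring.
have -> : (fun t => complex.Im
              (a + b * (cos (n%:R * t))%:C + c * (sin (n%:R * t))%:C)) =
    fun t => complex.Im a + complex.Im b * cos (n%:R * t) + complex.Im c * sin (n%:R * t).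
  by apply/funext => t; case: a b c => [? ?] [? ?] [? ?] /=; ring.
rewrite !Rintegral_harmonic //.
have pi2_neq0 : 2 * pi != 0 :> R by rewrite mulf_neq0 ?pnatr_eq0 // gt_eqF ?pi_gt0.
case: a => a1 a2; apply/eqP; rewrite eq_complex /= !mul0r subr0 addr0.
by rewrite ![_ * (2 * pi)]mulrC !mulKf ?eqxx.
Qed.

Lemma Etheta_cst (a : R[i]) : Etheta (fun=> a) = a.
Proof.
rewrite -[RHS](@Etheta_harmonic 1 a 0 0) //.
by apply: eq_Etheta => t; rewrite !mul0r !addr0.
Qed.

Lemma Etheta_mul_harmonic (n : nat) (a b a' b' : R[i]) : (0 < n)%N ->
  Etheta (fun t => ((cos (n%:R * t))%:C * a + (sin (n%:R * t))%:C * b) *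
                   ((cos (n%:R * t))%:C * a' + (sin (n%:R * t))%:C * b')) =
  (a * a' + b * b') / 2.
Proof.
move=> n_gt0.
rewrite -[RHS](@Etheta_harmonic n.*2 _ ((a * a' - b * b') / 2) ((a * b' + b * a') / 2));
  last by rewrite double_gt0.
apply: eq_Etheta => t; set u := n%:R * t.
have -> : n.*2%:R * t = u + u by rewrite -addnn natrD mulrDl.
have cos2E : (cos u)%:C ^+ 2 = 1 - (sin u)%:C ^+ 2.
  by rewrite -!rmorphXn cos2sin2 rmorphB rmorph1.
by rewrite cosD sinD; field: cos2E.
Qed.

End Harmonics.

Section PauliRotation.
Variable R : realType.
Local Notation M2 := 'M[R[i]]_2.

Lemma mulmx2E (M N : M2) a b : (M *m N) a b = M a 0 * N 0 b + M a 1 * N 1 b.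
Proof.
rewrite !mxE !big_ord_recl big_ord0 addr0.
by have -> : lift ord0 ord0 = 1 :> 'I_2 by apply/val_inj.
Qed.

Lemma mulii : 'i * 'i = -1 :> R[i].
Proof. by rewrite -expr2 sqr_i. Qed.

Lemma pauli0 : pauli R 0 = 1%:M.
Proof. by apply/matrixP => a b; rewrite /pauli !mxE; case: (a == b). Qed.

Ltac ring_by_components :=
  apply/eqP; rewrite eq_complex /=; apply/andP; split; apply/eqP; ring.

Lemma pauli_sq (k : 'I_4) : pauli R k *m pauli R k = 1%:M.
Proof.
apply/matrixP => a b; rewrite mulmx2E.
case: k => [[|[|[|[|k]]]] hk] //; case: a => [[|[|a]] ha] //;
  case: b => [[|[|b]] hb] //; rewrite /pauli !mxE /=; ring_by_components.
Qed.

Lemma pauli_comm (k j : 'I_4) :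
  (j == 0) || (j == k) -> pauli R k *m pauli R j = pauli R j *m pauli R k.
Proof. by case/orP => /eqP ->; rewrite ?pauli0 ?mulmx1 ?mul1mx. Qed.

Lemma pauli_anticomm (k j : 'I_4) :
  k != 0 -> j != 0 -> j != k -> pauli R k *m pauli R j = - (pauli R j *m pauli R k).
Proof.
move: k j => [[|[|[|[|k]]]] hk] [[|[|[|[|j]]]] hj] //= _ _ _.
all: apply/matrixP => a b; rewrite [RHS]mxE !mulmx2E.
all: case: a => [[|[|a]] ha] //; case: b => [[|[|b]] hb] //;
  rewrite /pauli !mxE /=; ring_by_components.
Qed.

Section Rotation.
Variable k : 'I_4.
Local Notation S := (pauli R k).
Local Notation W := (@Wrot R k).

Lemma Wrot0 : W 0 = 1%:M.
Proof. by rewrite /Wrot cos0 sin0 mulr0 scale0r subr0 scale1r. Qed.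

Lemma Wrot_add s t : W s *m W t = W (s + t).
Proof.
rewrite /Wrot mulmxBl !mulmxBr -!scalemxAl -!scalemxAr !mul1mx !mulmx1 pauli_sq.
by apply/matrixP => a b; rewrite !mxE cosD sinD; ring: mulii.
Qed.

Lemma adj_Wrot t : adj (W t) = W (- t).
Proof.
apply/matrixP => a b; rewrite /adj /Wrot !mxE cosN sinN.
case: k => [[|[|[|[|?]]]] ?] //; case: a => [[|[|a]] ha] //;
  case: b => [[|[|b]] hb] //; rewrite /pauli !mxE /=; ring_by_components.
Qed.

Lemma mxtrace_mulWrot (M : M2) t :
  \tr (M *m W t) = (cos t)%:C * \tr M + (sin t)%:C * (- 'i * \tr (M *m S)).
Proof. by rewrite /Wrot mulmxBr -!scalemxAr mulmx1 linearB /= !mxtraceZ; ring. Qed.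

Lemma Wrot_comm (B : M2) t : S *m B = B *m S -> W t *m B = B *m W t.
Proof.
by move=> SB; rewrite /Wrot mulmxBl mulmxBr -!scalemxAl -!scalemxAr mul1mx mulmx1 SB.
Qed.

Lemma Wrot_anticomm (B : M2) t : S *m B = - (B *m S) -> B *m W t = W (- t) *m B.
Proof.
move=> SB; rewrite /Wrot mulmxBl mulmxBr -!scalemxAl -!scalemxAr mul1mx mulmx1 SB.
by rewrite cosN sinN scalerN -scaleNr; congr (_ - _ *: _); ring.
Qed.

Lemma mxtrace_conj_Wrot_comm (A B : M2) t :
  S *m B = B *m S -> \tr (W t *m A *m adj (W t) *m B) = \tr (A *m B).
Proof.
move=> SB; rewrite adj_Wrot -!mulmxA mxtrace_mulC -!mulmxA -Wrot_comm //.
by rewrite [W (- t) *m _]mulmxA (Wrot_add (- t) t) addNr Wrot0 mul1mx.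
Qed.

Lemma mxtrace_conj_Wrot_anticomm (A B : M2) t :
  S *m B = - (B *m S) ->
  \tr (W t *m A *m adj (W t) *m B) = \tr (A *m B *m W (2 * t)).
Proof.
move=> SB; rewrite adj_Wrot -!mulmxA mxtrace_mulC -!mulmxA [W (- t) *m _]mulmxA.
by rewrite -(Wrot_anticomm t SB) -[(B *m _) *m _]mulmxA (Wrot_add t t) mulr_natl mulr2n.
Qed.

End Rotation.
End PauliRotation.

Theorem lemma3 (R : realType) (k j : 'I_4) (hk : k != 0 :> 'I_4)
    (A C : 'M[R[i]]_2) :
  let B := pauli R j in
  let D := pauli R j in
  let c := (kdelta R j 0 + kdelta R j k) / 2 in
  Etheta (fun theta =>
    \tr (Wrot k theta *m A *m adj (Wrot k theta) *m B) *
    \tr (Wrot k theta *m C *m adj (Wrot k theta) *m D)) =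
  (2^-1 + c) * \tr (A *m B) * \tr (C *m D) +
  (- 2^-1 + c) * \tr (A *m B *m pauli R k) * \tr (C *m D *m pauli R k).
Proof.
move=> B D c; rewrite {}/B {}/D.
have [jS | jS] := boolP ((j == 0) || (j == k)).
- have SB := pauli_comm R jS.
  have kd : kdelta R j 0 + kdelta R j k = 1.
    rewrite /kdelta; case/orP: jS => /eqP ->; rewrite eqxx.
    + by rewrite eq_sym (negPf hk) addr0.
    + by rewrite (negPf hk) add0r.
  under eq_Etheta => t do rewrite !mxtrace_conj_Wrot_comm //.
  by rewrite Etheta_cst /c kd; field.
- have [j0 jk] : j != 0 /\ j != k by apply/andP; rewrite -negb_or.
  have SB := pauli_anticomm R hk j0 jk.
  have kd : kdelta R j 0 + kdelta R j k = 0.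
    by rewrite /kdelta (negPf j0) (negPf jk) addr0.
  under eq_Etheta => t do rewrite !mxtrace_conj_Wrot_anticomm // !mxtrace_mulWrot.
  by rewrite Etheta_mul_harmonic // /c kd; field: (mulii R).
Qed.
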